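(* Let $(F_n)_{n\ge0}$ be the Fibonacci sequence ($F_0=0$, $F_1=1$, $F_{n+2}=F_{n+1}+F_n$) and $\Phi=(1+\sqrt5)/2$. For every fixed positive integer $m$, \[\log\mathrm{lcm}(F_n,F_{n+1},\dots,F_{n+m})\sim n(m+1)\log\Phi\quad\text{as } n\to+\infty.\] *)

From HB Require Import structures.
From mathcomp Require Import all_boot all_order all_algebra.
From mathcomp Require Import all_classical all_reals all_analysis.
Set Implicit Arguments. Unset Strict Implicit. Unset Printing Implicit Defensive.

Fixpoint fib (n : nat) : nat :=
  match n with
  | 0 => 0
  | 1 => 1
  | (k.+1 as k1).+1 => fib k1 + fib k
  end.

Definition lcm_fib (n m : nat) : nat :=
  \big[lcmn/1%N]_(n <= i < n + m.+1) fib i.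

Definition golden (R : realType) : R := (1 + Num.sqrt 5) / 2.

From HB Require Import structures.
From mathcomp Require Import all_boot all_order all_algebra.
From mathcomp Require Import all_classical all_reals all_analysis.
From mathcomp Require Import ring lra zify.
Import Order.TTheory GRing.Theory Num.Theory.
Local Open Scope classical_set_scope.

(* Since Phi^(i-2) <= F_i <= Phi^(i-1), the product P of F_n, ..., F_(n+m) is
   Phi^(n(m+1) + O(1)).  The lcm L divides P, and conversely P <= L * c^C(m+1,2)
   whenever the pairwise gcds are at most c: appending a number a multiplies the
   product by a = lcm(L, a) gcd(L, a) / L, and gcd(L, a) divides the product of
   the gcds of a with the previous numbers.  For Fibonacci numbers
   gcd(F_i, F_j) divides F_(j-i) <= F_m, so log L = n(m+1) log Phi + O(1). *)

Lemma fibSS n : fib n.+2 = fib n.+1 + fib n.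
Proof. by []. Qed.

Lemma fib_gt0 n : (0 < fib n) = (0 < n).
Proof.
case: n => // n; elim: n => // n IHn.
by rewrite fibSS addn_gt0 IHn.
Qed.

Lemma leq_fib : {homo fib : m n / m <= n}.
Proof.
apply: homo_leq => [//|n m p|]; first exact: leq_trans.
by case=> // n; rewrite fibSS leq_addr.
Qed.

Lemma fib_addS m n : fib (m + n).+1 = fib m.+1 * fib n.+1 + fib m * fib n.
Proof.
elim: m n => [|m IHm] n; first by rewrite add0n mul1n mul0n addn0.
by rewrite addSnnS IHm !fibSS; ring.
Qed.

Lemma coprime_fibS n : coprime (fib n) (fib n.+1).
Proof. by elim: n => // n IHn; rewrite /coprime fibSS gcdnDl gcdnC. Qed.

Lemma dvdn_gcd_fib_add m n : gcdn (fib m) (fib (m + n)) %| fib n.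
Proof.
case: n => [|n]; first exact: dvdn0.
set g := gcdn _ _; have g_fm : g %| fib m := dvdn_gcdl _ _.
have := dvdn_gcdr (fib m) (fib (m + n.+1)); rewrite -/g.
rewrite addnS addnC fib_addS (dvdn_addl _ (dvdn_mull _ g_fm)) mulnC.
by rewrite Gauss_dvdr // (coprime_dvdl g_fm (coprime_fibS m)).
Qed.

Lemma gcd_fib_leq i j k : i < j <= i + k -> gcdn (fib i) (fib j) <= fib k.
Proof.
case/andP=> lt_ij le_jk; rewrite -(subnKC (ltnW lt_ij)).
have le_k : j - i <= k by lia.
apply: leq_trans _ (leq_fib _ _ le_k); apply: dvdn_leq (dvdn_gcd_fib_add _ _).
by rewrite fib_gt0 subn_gt0.
Qed.

Lemma dvdn_biglcm_prod {I : Type} (r : seq I) (F : I -> nat) :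
  \big[lcmn/1]_(i <- r) F i %| \prod_(i <- r) F i.
Proof.
elim: r => [|i r IHr]; rewrite ?big_nil ?big_cons //.
by rewrite dvdn_lcm dvdn_mulr ?dvdn_mull.
Qed.

Lemma dvdn_gcd_biglcm_prod {I : Type} (r : seq I) (F : I -> nat) a :
  gcdn (\big[lcmn/1]_(i <- r) F i) a %| \prod_(i <- r) gcdn (F i) a.
Proof.
elim: r => [|i r IHr]; rewrite ?big_nil ?big_cons ?gcd1n //.
by rewrite Order.NatDvd.meetUl dvdn_lcm dvdn_mulr ?dvdn_mull.
Qed.

Lemma prod_leq_biglcm_pairwise_gcd {I : eqType} (r : seq I) (F : I -> nat) c :
  pairwise (fun i j => gcdn (F i) (F j) <= c) r ->
  \prod_(i <- r) F i <= \big[lcmn/1]_(i <- r) F i * c ^ 'C(size r, 2).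
Proof.
elim: r => [|i r IHr]; first by rewrite !big_nil.
rewrite pairwise_cons => /andP[/allP gcd_ir_le /IHr {}IHr].
set L := \big[lcmn/1]_(j <- r) F j; rewrite !big_cons -/L.
have [-> // | Fi_gt0] := posnP (F i).
have gcd_le : gcdn L (F i) <= c ^ size r.
  apply: leq_trans (dvdn_leq _ (dvdn_gcd_biglcm_prod r F (F i))) _.
    by apply: prodn_gt0 => j; rewrite gcdn_gt0 Fi_gt0 orbT.
  rewrite -count_predT -iter_muln_1 -big_const_seq big_seq [leqRHS]big_seq.
  by apply: leq_prod => j /gcd_ir_le; rewrite gcdnC.
apply: leq_trans (leq_mul (leqnn (F i)) IHr) _.
rewrite /= -/L binS bin1 expnD mulnA -(muln_lcm_gcd (F i) L) -mulnA leq_mul2l.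
by rewrite [c ^ 'C(_, 2) * _]mulnC leq_mul2r gcdnC gcd_le !orbT.
Qed.

Lemma pairwise_gcd_fib_iota n m :
  pairwise (fun i j => gcdn (fib i) (fib j) <= fib m) (iota n m.+1).
Proof.
have lt_iota : pairwise ltn (iota n m.+1).
  by rewrite -(sorted_pairwise ltn_trans) iota_ltn_sorted.
apply: sub_in_pairwise (allss _) lt_iota => i j.
rewrite !mem_iota => /andP[le_ni lt_i] /andP[le_nj lt_j] lt_ij.
by apply: gcd_fib_leq; apply/andP; split; lia.
Qed.

Lemma lcm_fib_prod_bounds n m : 0 < n ->
  lcm_fib n m <= \prod_(n <= i < n + m.+1) fib i <= lcm_fib n m * fib m ^ 'C(m.+1, 2).
Proof.
move=> n_gt0; rewrite /lcm_fib /index_iota addKn; apply/andP; split.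
  apply: dvdn_leq (dvdn_biglcm_prod _ _); rewrite big_seq_cond.
  by apply: prodn_cond_gt0 => i /andP[+ _]; rewrite mem_iota fib_gt0; lia.
have := prod_leq_biglcm_pairwise_gcd _ fib _ (pairwise_gcd_fib_iota n m).
by rewrite size_iota.
Qed.

Local Open Scope ring_scope.

Section GoldenRatio.
Variable R : realType.

Lemma golden_sqr : golden R ^+ 2 = golden R + 1.
Proof.
rewrite /golden; have := sqr_sqrtr (ler0n R 5); set s := Num.sqrt 5 => s2.
by rewrite expr2 in s2 *; lra.
Qed.

Lemma golden_gt1 : 1 < golden R.
Proof.
rewrite /golden; have := sqr_sqrtr (ler0n R 5); have := sqrtr_ge0 (5 : R).
set s := Num.sqrt 5 => s_ge0 s2; rewrite expr2 in s2; nra.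
Qed.

Lemma golden_le2 : golden R <= 2.
Proof.
have := golden_sqr; have := golden_gt1; rewrite expr2; set p := golden R; nra.
Qed.

Lemma fib_golden_bounds k : golden R ^+ k <= (fib k.+2)%:R <= golden R ^+ k.+1.
Proof.
have exprSS j : golden R ^+ j.+2 = golden R ^+ j.+1 + golden R ^+ j.
  by rewrite -addn2 exprD golden_sqr mulrDr mulr1 -exprSr.
suff [] : golden R ^+ k <= (fib k.+2)%:R <= golden R ^+ k.+1 /\
          golden R ^+ k.+1 <= (fib k.+3)%:R <= golden R ^+ k.+2 by [].
elim: k => [|k [/andP[lo0 up0] /andP[lo1 up1]]].
  rewrite expr0 expr1 exprSS expr1 expr0 /= addn0 mulr1n; change (1 + 1)%N with 2%N.
  have g1 := golden_gt1; have g2 := golden_le2.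
  by split; apply/andP; split; lra.
split; first exact/andP.
rewrite (fibSS k.+2) natrD (exprSS k) (exprSS k.+1).
by apply/andP; split; apply: lerD.
Qed.

Lemma prod_fib_golden_bounds n k : (2 <= n)%N ->
  golden R ^+ (n - 2) ^+ k <= (\prod_(n <= i < n + k) fib i)%:R
  <= golden R ^+ (n + k) ^+ k.
Proof.
move=> n_ge2; have golden_ge1 : 1 <= golden R := ltW golden_gt1.
have fib_bounds i : (n <= i < n + k)%N ->
    0 <= golden R ^+ (n - 2) <= (fib i)%:R /\
    (0 : R) <= (fib i)%:R <= golden R ^+ (n + k).
  move=> /andP[le_ni lt_ik]; have [j def_i] : exists j, i = j.+2 by exists (i - 2)%N; lia.
  subst i.
  have /andP[lo up] := fib_golden_bounds j.
  rewrite ler0n exprn_ge0 ?(le_trans ler01) //=; split.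
    by apply: le_trans lo; apply: (ler_weXn2l golden_ge1); lia.
  by apply: le_trans up _; apply: (ler_weXn2l golden_ge1); lia.
have prod_const (x : R) : x ^+ k = \prod_(n <= i < n + k) x.
  by rewrite prodr_const_nat addKn.
rewrite natr_prod (prod_const (golden R ^+ _)) (prod_const (golden R ^+ (n + k))).
apply/andP; split; rewrite big_nat_cond [leRHS]big_nat_cond.
  by apply: ler_prod => i /andP[/fib_bounds[]].
by apply: ler_prod => i /andP[/fib_bounds[]].
Qed.
End GoldenRatio.

Lemma ln_lcm_fib_sub_le (R : realType) n m : (2 <= n)%N ->
  `|ln ((lcm_fib n m)%:R : R) - n%:R * m.+1%:R * ln (golden R)|
    <= ((m.+1 + 2) * m.+1)%:R * ln (golden R) + ln ((fib m ^ 'C(m.+1, 2))%:R : R).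
Proof.
move=> n_ge2; have golden_gt0 : 0 < golden R := lt_trans ltr01 (golden_gt1 R).
have /andP[le_LP le_PLD] := lcm_fib_prod_bounds n m (ltnW n_ge2).
have /andP[lo_P up_P] := prod_fib_golden_bounds R n m.+1 n_ge2.
set L := lcm_fib n m in le_LP le_PLD *; set D := (fib m ^ _)%N in le_PLD *.
set P := (\prod_(_ <= _ < _) _)%N in le_LP le_PLD lo_P up_P.
have P_gt0 : (0 < P)%N by rewrite -(ltr0n R) (lt_le_trans _ lo_P) ?exprn_gt0.
have [L_gt0 D_gt0] : (0 < L)%N /\ (0 < D)%N.
  by apply/andP; rewrite -muln_gt0 (leq_trans P_gt0).
have pos_nat k : (0 < k)%N -> (k%:R : R) \is Num.pos by rewrite posrE ltr0n.
have ln_golden_expnX a b : ln (golden R ^+ a ^+ b) = (a * b)%:R * ln (golden R).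
  by rewrite -exprM lnXn // mulr_natl.
have ln_LP : ln (L%:R : R) <= ln P%:R by rewrite ler_ln ?pos_nat // ler_nat.
have ln_PLD : ln (P%:R : R) <= ln L%:R + ln D%:R.
  by rewrite -lnM ?pos_nat // -natrM ler_ln ?pos_nat ?muln_gt0 ?L_gt0 // ler_nat.
have ln_lo_P : ((n - 2) * m.+1)%:R * ln (golden R) <= ln (P%:R : R).
  by rewrite -ln_golden_expnX ler_ln ?pos_nat // posrE !exprn_gt0.
have ln_up_P : ln (P%:R : R) <= ((n + m.+1) * m.+1)%:R * ln (golden R).
  by rewrite -ln_golden_expnX ler_ln ?pos_nat // posrE !exprn_gt0.
have ln_D_ge0 : 0 <= ln (D%:R : R) by rewrite ln_ge0 // ler1n.
set c := ln (golden R) in ln_lo_P ln_up_P *.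
have c_ge0 : 0 <= c by rewrite ln_ge0 // ltW ?golden_gt1.
have mc_ge0 : 0 <= m.+1%:R * c by rewrite mulr_ge0.
have mmc_ge0 : 0 <= m.+1%:R * m.+1%:R * c by rewrite !mulr_ge0.
rewrite !natrM !natrD natrB // in ln_lo_P ln_up_P *.
by rewrite ler_norml; apply/andP; split; lra.
Qed.

Lemma equiv_of_bounded_sub (R : realType) (T : Type) (F : filter_on T)
    (u v : T -> R) (C : R) :
  (\forall x \near F, `|u x - v x| <= C) -> v x @[x --> F] --> +oo -> u ~_F v.
Proof.
move=> bounded_sub /cvgryPgt v_oo; apply/eqaddoP => e e_gt0.
near=> x.
have sub_le : `|u x - v x| <= C by near: x.
have C_le : C <= e * `|v x|.
  rewrite -ler_pdivrMl // ltW // (lt_le_trans _ (ler_norm _)) //.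
  by near: x; apply: v_oo.
exact: le_trans sub_le C_le.
Unshelve. all: by end_near.
Qed.

Theorem corollary3 (R : realType) (m : nat) (hm : (0 < m)%N) :
  (fun n : nat => ln ((lcm_fib n m)%:R : R))
    ~_\oo (fun n : nat => n%:R * (m.+1)%:R * ln (golden R)).
Proof.
have c_gt0 : 0 < ln (golden R) := ln_gt0 (golden_gt1 R).
apply: equiv_of_bounded_sub.
  exists 2%N => // n n_ge2; exact: ln_lcm_fib_sub_le.
apply: (cvg_comp (fun n : nat => n%:R) (fun r => r * m.+1%:R * ln (golden R)) cvgr_idn).
apply: (gt0_cvgMly (f := fun r => r * m.+1%:R)) c_gt0 _.
by apply: gt0_cvgMly cvg_id; rewrite ltr0n.
Qed.
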